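(* Let $d,s,n$ be positive integers, $f_0^*:\{\pm1\}^s\to\mathbb R$, $S^*\subset[d]$ with $|S^*|=s$, $f^*(\mathbf x)=f_0^*(\mathbf x_{S^*})$, and let $\mathcal D_n=\{(\mathbf X_i,Y_i)\}_{i=1}^n$ with $\mathbf X_i$ i.i.d. uniform on $\{\pm1\}^d$, $Y_i=f^*(\mathbf X_i)+\varepsilon_i$, $\varepsilon_i$ i.i.d. zero-mean independent of the covariates. Let $\hat f$ be a regression tree model fit by a regression tree algorithm $\mathcal A$ with random seed $\Theta$. Then $\mathfrak R(\hat f,f_0^*,d,n)\ge(1-\delta)\operatorname{Var}\{f_0^*(\mathbf X)\}$, where $\delta=\mathbb P\{J(\mathbf X;\mathcal D_n,\Theta)\cap S^*\ne\emptyset\}$ with $\mathbf X$ uniform on $\{\pm1\}^d$ independent of $(\mathcal D_n,\Theta)$.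
   Context: A cell is a subcube $C=\{\mathbf x:x_j=z_j,\ j\in J(C)\}$, split on $k\notin J(C)$ into $C\cap\{x_k=\pm1\}$. A regression tree model is a function constant on each leaf of a binary tree obtained by recursively splitting cells starting from $\{\pm1\}^d$; internal nodes are labeled by their split covariate. A regression tree algorithm maps $(\mathcal D_n,\Theta)$ to such a model, $\Theta$ being random and independent of the data. The query path of $\mathbf x$ is the root-to-leaf path to the leaf containing $\mathbf x$, and $J(\mathbf x;\mathcal D_n,\Theta)$ is the set of split covariates of the nodes on this path. $R(g,f^* )=\mathbb E_{\mathbf X}\{(g(\mathbf X)-f^*(\mathbf X))^2\}$, $\mathfrak R(\hat f,f_0^*,d,n)=\mathbb E_{\mathcal D_n,\Theta}R(\hat f(\cdot;\mathcal D_n,\Theta),f^* )$; $\operatorname{Var}\{f_0^*(\mathbf X)\}$ is the variance under the uniform distribution. *)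

From HB Require Import structures.
From mathcomp Require Import all_boot all_order all_algebra.
From mathcomp Require Import all_classical all_reals all_analysis.
Set Implicit Arguments. Unset Strict Implicit. Unset Printing Implicit Defensive.
Import Order.TTheory GRing.Theory Num.Theory.
Local Open Scope classical_set_scope.
Local Open Scope ring_scope.

(* Points of the hypercube {+-1}^d, encoded with true = +1, false = -1. *)
Definition cube (d : nat) := {ffun 'I_d -> bool}.

(* x_{S}: the sub-vector of x indexed by S (in increasing order of indices),
   viewed as a cube of {+-1}^s (meaningful when #|S| = s). *)
Definition subvec (d s : nat) (S : {set 'I_d}) (x : cube d) : cube s :=
  [ffun i : 'I_s => nth false [seq x j | j <- enum S] i].

(* The left child is the cell
   C /\ {x_k = -1}, the right child is C /\ {x_k = +1}. *)
Inductive tree (R : Type) (d : nat) :=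
| Leaf of R
| Node of 'I_d & tree R d & tree R d.
Arguments Leaf {R d}.
Arguments Node {R d}.

(* Well-formedness: the split covariate of a cell C is not in J(C). *)
Fixpoint valid_from (R : Type) (d : nat) (J : {set 'I_d}) (t : tree R d) : bool :=
  match t with
  | Leaf _ => true
  | Node k l r => (k \notin J) && valid_from (k |: J) l && valid_from (k |: J) r
  end.
Definition valid (R : Type) (d : nat) (t : tree R d) := valid_from (@finset.set0 _) t.

Fixpoint eval_tree (R : Type) (d : nat) (t : tree R d) (x : cube d) : R :=
  match t with
  | Leaf c => c
  | Node k l r => if x k then eval_tree r x else eval_tree l x
  end.

Fixpoint query_split_set (R : Type) (d : nat) (t : tree R d) (x : cube d)
    : {set 'I_d} :=
  match t with
  | Leaf _ => @finset.set0 _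
  | Node k l r => k |: (if x k then query_split_set r x else query_split_set l x)
  end.

Definition dataset (R : Type) (d n : nat) := {ffun 'I_n -> cube d * R}.

Definition unif_risk (R : realType) (d : nat) (g f : cube d -> R) : R :=
  (2 ^+ d)^-1 * \sum_(x : cube d) (g x - f x) ^+ 2.

Definition unif_mean (R : realType) (s : nat) (f0 : cube s -> R) : R :=
  (2 ^+ s)^-1 * \sum_(y : cube s) f0 y.
Definition unif_var (R : realType) (s : nat) (f0 : cube s -> R) : R :=
  (2 ^+ s)^-1 * \sum_(y : cube s) (f0 y - unif_mean f0) ^+ 2.

Definition mutually_independent (R : realType) (dO : measure_display)
    (O : measurableType dO) (P : probability O R) (I : finType)
    (G : I -> set (set O)) : Prop :=
  forall (F : {set I}) (E : I -> set O),
    (forall i, i \in F -> G i (E i)) ->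
    fine (P (\big[setI/setT]_(i in F) E i)) = \prod_(i in F) fine (P (E i)).

(* Index set for the 2n+1 random elements X_1..X_n, eps_1..eps_n, Theta. *)
Definition sample_events (R : realType) (dO : measure_display)
    (O : measurableType dO) (d n : nat) (dT : measure_display)
    (T : measurableType dT) (X : 'I_n -> O -> cube d) (eps : 'I_n -> O -> R)
    (Theta : O -> T) (i : ('I_n + 'I_n) + unit) : set (set O) :=
  match i with
  | inl (inl i) => [set X i @^-1` B | B in [set: set (cube d)]]
  | inl (inr i) => [set eps i @^-1` B | B in [set B : set R | measurable B]]
  | inr _ => [set Theta @^-1` B | B in [set B : set T | measurable B]]
  end.

From mathcomp Require Import all_boot all_order all_algebra.
From mathcomp Require Import all_classical all_reals all_analysis.
From mathcomp Require Import ring measurable_realfun.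
Import Order.TTheory GRing.Theory Num.Theory.
Local Open Scope classical_set_scope.
Local Open Scope ring_scope.
Set Implicit Arguments. Unset Strict Implicit. Unset Printing Implicit Defensive.

(* Fix a tree t and say that x avoids S* when the query path of x uses no
   covariate of S*.  Changing the coordinates of such an x inside S* changes
   neither its path nor its prediction, so the avoiding points come in whole
   fibres {x' | x' = x off S*}, along which t is constant while f* runs
   through every value of f0 exactly once.  Since a constant c has
   E (c - f0)^2 >= Var f0, these fibres alone contribute (1 - delta(t)) Var f0
   to the risk of t, where delta(t) is the share of points whose path meets
   S*.  This holds for every tree, so averaging over (D_n, Theta) gives the
   theorem. *)

Section Fibres.
Variables (d s : nat) (S : {set 'I_d}).
Hypothesis hS : #|S| = s.

Definition agree_off (x x' : cube d) : bool :=
  [forall j, (j \notin S) ==> (x j == x' j)].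

(* [y] in the coordinates of [S], listed increasingly, and [x] elsewhere;
   this relies on [#|S| = s], as [index j (enum S) = #|S|] for [j \notin S]. *)
Definition merge (x : cube d) (y : cube s) : cube d :=
  [ffun j => if insub (index j (enum S)) is Some i then y i else x j].

Lemma agree_offC x x' : agree_off x x' = agree_off x' x.
Proof. by apply/forallP/forallP => h j; have := h j; rewrite eq_sym. Qed.

Lemma merge_notin x y j : j \notin S -> merge x y j = x j.
Proof. by move=> jS; rewrite ffunE insubN // -hS cardE index_mem mem_enum. Qed.

Lemma agree_off_merge x y : agree_off x (merge x y).
Proof. by apply/forallP => j; apply/implyP => jS; rewrite merge_notin. Qed.

Lemma subvec_merge x y : subvec s S (merge x y) = y.
Proof.
apply/ffunP => i; have iS : (i < size (enum S))%N by rewrite -cardE hS.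
rewrite ffunE (nth_map (enum_val (cast_ord (esym hS) i))) // ffunE.
rewrite index_uniq ?enum_uniq //.
by case: insubP => [i' _ /val_inj -> //|]; rewrite ltn_ord.
Qed.

Lemma merge_subvec x x' : agree_off x x' -> merge x (subvec s S x') = x'.
Proof.
move=> /forallP xx'; apply/ffunP => j; have [jS|jS] := boolP (j \in S); last first.
  by rewrite merge_notin //; apply/eqP; have := xx' j; rewrite jS.
rewrite ffunE; case: insubP => [i _ ij|]; last first.
  by rewrite -hS cardE index_mem mem_enum jS.
by rewrite ffunE (nth_map j) ?ij ?nth_index ?index_mem ?mem_enum.
Qed.

Lemma sum_agree_off (V : nmodType) x (F : cube d -> V) :
  \sum_(x' | agree_off x x') F x' = \sum_(y : cube s) F (merge x y).
Proof.
rewrite (reindex_onto (merge x) (subvec s S)) => [|x' /merge_subvec //].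
by apply: eq_bigl => y; rewrite agree_off_merge subvec_merge eqxx.
Qed.

End Fibres.

Lemma eq_on_query_path (R : Type) d (t : tree R d) (x x' : cube d) :
  {in query_split_set t x, x =1 x'} ->
  query_split_set t x' = query_split_set t x /\ eval_tree t x' = eval_tree t x.
Proof.
elim: t => [c|k l IHl r IHr] //= xx'.
have <- : x k = x' k by apply: xx'; rewrite setU11.
have {}xx' : {in if x k then query_split_set r x else query_split_set l x, x =1 x'}.
  by move=> j jJ; apply: xx'; rewrite setU1r.
by case: (x k) xx' => [/IHr|/IHl] [-> ->].
Qed.

Definition avoids (R : Type) d (S : {set 'I_d}) (t : tree R d) (x : cube d) : bool :=
  query_split_set t x :&: S == finset.set0.

Section AvoidingPoints.
Variables (R : Type) (d : nat) (S : {set 'I_d}) (t : tree R d).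

Lemma agree_off_query_path x x' : avoids S t x -> agree_off S x x' ->
  query_split_set t x' = query_split_set t x /\ eval_tree t x' = eval_tree t x.
Proof.
move=> /eqP/setP xS /forallP xx'; apply: eq_on_query_path => j jJ.
have jS : j \notin S by apply/negP => jS; have := xS j; rewrite !inE jJ jS.
by apply/eqP; have := xx' j; rewrite jS.
Qed.

Lemma avoids_agree_off x x' : avoids S t x -> agree_off S x x' -> avoids S t x'.
Proof. by move=> xS xx'; rewrite /avoids (agree_off_query_path xS xx').1. Qed.

End AvoidingPoints.

Lemma sum_cube_const (R : nzSemiRingType) s (c : R) :
  \sum_(y : cube s) c = c * 2 ^+ s.
Proof. by rewrite sumr_const card_ffun card_bool card_ord -[in LHS]mulr_natr natrX. Qed.

Lemma unif_var_ge0 (R : realType) s (f0 : cube s -> R) : 0 <= unif_var f0.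
Proof.
by rewrite mulr_ge0 ?invr_ge0 ?exprn_ge0 ?sumr_ge0 // => y _; rewrite sqr_ge0.
Qed.

Lemma unif_var_le (R : realType) s (f0 : cube s -> R) (c : R) :
  unif_var f0 <= (2 ^+ s)^-1 * \sum_(y : cube s) (c - f0 y) ^+ 2.
Proof.
rewrite ler_pM2l ?invr_gt0 ?exprn_gt0 //.
set m := unif_mean f0.
have sum_f0 : \sum_(y : cube s) f0 y = 2 ^+ s * m.
  by rewrite /m /unif_mean mulrA mulfV ?mul1r // expf_neq0 // pnatr_eq0.
rewrite -subr_ge0 -sumrB.
rewrite (eq_bigr (fun y => (c - m) * (c + m) - 2 * (c - m) * f0 y)) => [|y _].
  2: by ring.
rewrite sumrB sum_cube_const -mulr_sumr sum_f0.
have -> : (c - m) * (c + m) * 2 ^+ s - 2 * (c - m) * (2 ^+ s * m) =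
          2 ^+ s * (c - m) ^+ 2 by ring.
by rewrite mulr_ge0 ?sqr_ge0 ?exprn_ge0.
Qed.

Definition query_hit_prob (R : realType) d (S : {set 'I_d}) (t : tree R d) : R :=
  (2 ^+ d)^-1 *
  #|[pred x : cube d | query_split_set t x :&: S != finset.set0]|%:R.

Section QueryHitProb.
Variables (R : realType) (d : nat) (S : {set 'I_d}) (t : tree R d).

Lemma oneB_query_hit_prob :
  1 - query_hit_prob S t = (2 ^+ d)^-1 * #|avoids S t|%:R.
Proof.
have cube_card : (#|avoids S t| + #|[predC avoids S t]| = 2 ^ d)%N.
  by rewrite cardC card_ffun card_bool card_ord.
have two_d_neq0 : (2 ^+ d : R) != 0 by rewrite expf_neq0 // pnatr_eq0.
rewrite /query_hit_prob (eq_card (B := [predC avoids S t])) //.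
by rewrite -[X in X - _](mulVf two_d_neq0) -mulrBr -natrX -cube_card natrD addrK.
Qed.

Lemma query_hit_prob_ge0 : 0 <= query_hit_prob S t.
Proof. by rewrite mulr_ge0 ?invr_ge0 ?exprn_ge0. Qed.

Lemma query_hit_prob_le1 : query_hit_prob S t <= 1.
Proof.
by rewrite -subr_ge0 oneB_query_hit_prob mulr_ge0 ?invr_ge0 ?exprn_ge0.
Qed.

End QueryHitProb.

Section TreeRisk.
Variables (R : realType) (d s : nat) (S : {set 'I_d}).
Variables (f0 : cube s -> R) (t : tree R d).
Hypothesis hS : #|S| = s.

Let sq_err x := (eval_tree t x - f0 (subvec s S x)) ^+ 2.

Lemma fibre_sq_err_ge x : avoids S t x ->
  2 ^+ s * unif_var f0 <= \sum_(x' | agree_off S x x') sq_err x'.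
Proof.
move=> xS; rewrite (sum_agree_off hS).
under eq_bigr => y _.
  rewrite /sq_err (subvec_merge hS) (agree_off_query_path xS (agree_off_merge hS _ _)).2.
  over.
by rewrite -ler_pdivlMl ?exprn_gt0 //; apply: unif_var_le.
Qed.

Lemma sum_avoids_sq_err_ge :
  #|avoids S t|%:R * unif_var f0 <= \sum_(x | avoids S t x) sq_err x.
Proof.
have double_count : \sum_(x | avoids S t x) sq_err x * 2 ^+ s =
    \sum_(x | avoids S t x) \sum_(x' | agree_off S x x') sq_err x'.
  rewrite (exchange_big_dep (avoids S t)) => [|x x'] /=; last exact: avoids_agree_off.
  apply: eq_bigr => x' x'S; rewrite -(sum_cube_const s (sq_err x')).
  rewrite -(sum_agree_off hS x' (fun=> sq_err x')).
  apply: eq_bigl => x; rewrite agree_offC andb_idl //.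
  by rewrite agree_offC => /(avoids_agree_off x'S).
have : \sum_(x | avoids S t x) 2 ^+ s * unif_var f0 <=
       \sum_(x | avoids S t x) sq_err x * 2 ^+ s.
  by rewrite double_count; apply: ler_sum => x; apply: fibre_sq_err_ge.
rewrite -mulr_sumr -mulr_suml sumr_const -(mulr_natl (unif_var f0)).
by rewrite [leRHS]mulrC ler_pM2l ?exprn_gt0 //; apply.
Qed.

Lemma tree_risk_ge : (1 - query_hit_prob S t) * unif_var f0 <=
  unif_risk (eval_tree t) (fun x => f0 (subvec s S x)).
Proof.
rewrite oneB_query_hit_prob /unif_risk -mulrA ler_pM2l ?invr_gt0 ?exprn_gt0 //.
apply: le_trans sum_avoids_sq_err_ge _.
by rewrite [leRHS](bigID (avoids S t)) lerDl sumr_ge0 // => x _; rewrite sqr_ge0.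
Qed.

End TreeRisk.

Section Measurability.
Context (R : realType) (dO : measure_display) (O : measurableType dO).

Lemma measurable_fun_card (I : finType) (b : O -> I -> bool) :
  (forall i, measurable [set w | b w i]) ->
  measurable_fun setT (fun w => #|[pred i | b w i]|%:R : R).
Proof.
move=> mb; rewrite (_ : (fun w => _) = fun w => \sum_i \1_[set w | b w i] w).
  by apply: measurable_sum => i; apply: measurable_indic.
apply/funext => w; rewrite -sum1_card natr_sum big_mkcond /=.
apply: eq_bigr => i _; rewrite indicE inE.
by have [bwi|/negP bwi] := boolP (b w i); [rewrite mem_set | rewrite memNset].
Qed.

Lemma measurable_query_hit_prob d (S : {set 'I_d}) (fit : O -> tree R d) :
  (forall x, measurable [set w | query_split_set (fit w) x :&: S != finset.set0]) ->
  measurable_fun setT (fun w => query_hit_prob S (fit w)).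
Proof.
by move=> mJ; apply: measurable_funM => //; apply: measurable_fun_card.
Qed.

Lemma measurable_unif_risk d (g : O -> cube d -> R) (f : cube d -> R) :
  (forall x, measurable_fun setT (g^~ x)) ->
  measurable_fun setT (fun w => unif_risk (g w) f).
Proof.
move=> mg; apply: measurable_funM => //; apply: measurable_sum => x.
by apply: measurable_funX; apply: measurable_funB.
Qed.

End Measurability.

Section Expectation.
Context (R : realType) (dO : measure_display) (O : measurableType dO).
Variable P : probability O R.
Local Open Scope ereal_scope.

Lemma integral_oneB (h : O -> R) : measurable_fun setT h ->
  (forall w, 0 <= h w <= 1)%R ->
  \int[P]_w (1 - h w)%:E = 1 - \int[P]_w (h w)%:E.
Proof.
move=> mh h01.
have ih : P.-integrable setT (EFin \o h).
  have PT : P setT < +oo by rewrite probability_setT ltry.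
  apply: (measurable_bounded_integrable measurableT PT mh).
  exists 1%R; split => // M M1 w _ /=; have /andP[h0 h1] := h01 w.
  by rewrite ger0_norm // (le_trans h1) // ltW.
under eq_integral do rewrite EFinB.
rewrite integralB_EFin //; last exact: finite_measure_integrable_cst.
by rewrite integral_cst // mul1e; congr (_ - _); apply: probability_setT.
Qed.

Lemma oneB_integral_mulr_le (h r : O -> R) (v : R) :
  measurable_fun setT h -> measurable_fun setT r ->
  (forall w, 0 <= h w <= 1)%R -> (0 <= v)%R ->
  (forall w, (1 - h w) * v <= r w)%R ->
  (1 - \int[P]_w (h w)%:E) * v%:E <= \int[P]_w (r w)%:E.
Proof.
move=> mh mr h01 v0 hr.
have h1 w : (0 <= 1 - h w)%R by have /andP[_ ?] := h01 w; rewrite subr_ge0.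
rewrite -integral_oneB // -ge0_integralZr //; last first.
- by move=> w _; rewrite lee_fin.
- by apply/measurable_EFinP; apply: measurable_funB.
apply: ge0_le_integral => //.
- by move=> w _; rewrite -EFinM lee_fin mulr_ge0.
- by apply: emeasurable_funM => //; apply/measurable_EFinP; apply: measurable_funB.
- exact/measurable_EFinP.
- by move=> w _; rewrite -EFinM lee_fin.
Qed.
End Expectation.

Theorem lemma3 (R : realType) (d s n : nat)
  (hd : (0 < d)%N) (hs : (0 < s)%N) (hn : (0 < n)%N)
  (f0 : cube s -> R) (Sstar : {set 'I_d}) (hS : #|Sstar| = s)
  (dO : measure_display) (O : measurableType dO) (P : probability O R)
  (dT : measure_display) (T : measurableType dT)
  (X : 'I_n -> O -> cube d) (eps : 'I_n -> O -> R) (Theta : O -> T)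
  (A : dataset R d n -> T -> tree R d) :
  let fstar := fun x : cube d => f0 (subvec s Sstar x) in
  let Dn := fun w : O => [ffun i => (X i w, fstar (X i w) + eps i w)] in
  let fit := fun w : O => A (Dn w) (Theta w) in
  (* X_i uniform on {+-1}^d *)
  (forall i (x : cube d), measurable (X i @^-1` [set x]) /\
     P (X i @^-1` [set x]) = ((2 ^+ d)^-1)%:E) ->
  (* eps_i identically distributed, integrable, zero mean *)
  (forall i, measurable_fun setT (eps i)) ->
  (forall i j (B : set R), measurable B ->
     P (eps i @^-1` B) = P (eps j @^-1` B)) ->
  (forall i, P.-integrable setT (EFin \o eps i) /\
     (\int[P]_w (eps i w)%:E = 0)%E) ->
  (* Theta is a random element *)
  measurable_fun setT Theta ->
  (* X_1..X_n, eps_1..eps_n, Theta mutually independent *)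
  mutually_independent P (sample_events X eps Theta) ->
  (* A is a regression tree algorithm *)
  (forall D th, valid (A D th)) ->
  (* measurability of the fitted model and of the query-path events *)
  (forall x : cube d, measurable_fun setT (fun w => eval_tree (fit w) x)) ->
  (forall x : cube d,
     measurable [set w | query_split_set (fit w) x :&: Sstar != @finset.set0 _]) ->
  let risk := (\int[P]_w (unif_risk (eval_tree (fit w)) fstar)%:E)%E in
  let delta := (\int[P]_w
      ((2 ^+ d)^-1 *
       #|[pred x : cube d | query_split_set (fit w) x :&: Sstar != @finset.set0 _]|%:R)%:E)%E in
  ((1 - delta) * (unif_var f0)%:E <= risk)%E.
Proof.
move=> fstar Dn fit _ _ _ _ _ _ _ mfit mhit; lazy zeta.
apply: (oneB_integral_mulr_le P (h := fun w => query_hit_prob Sstar (fit w))).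
- exact: measurable_query_hit_prob.
- exact: measurable_unif_risk.
- by move=> w; rewrite query_hit_prob_ge0 query_hit_prob_le1.
- exact: unif_var_ge0.
- by move=> w; apply: tree_risk_ge.
Qed.
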